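(* Let $\mathcal{G}=(\mathcal{V},\mathcal{E})$ be a directed graph with $n$ nodes, $m$ edges and terminals $s,t$, let $f:2^{\mathcal{E}}\to\mathbb{R}_+$ be normalized, monotone nondecreasing and submodular with Lovász extension $\tilde f$, and let $C^*$ be an $(s,t)$-cut minimizing $f$. Let $(x^*,y^* )$ be an optimal solution of the relaxation $$\min_{y\in\mathbb{R}^{\mathcal{E}},x\in\mathbb{R}^{\mathcal{V}}}\tilde f(y)\ \text{ s.t. } -x(u)+x(v)+y(e)\ge 0\ \forall e=(u,v)\in\mathcal{E},\ x(s)-x(t)\ge1,\ y\ge0,$$ with $x^*\in[0,1]^n$, $y^*\in[0,1]^m$. For $\theta$ drawn uniformly at random from $[0,1]$, let $\mathcal{V}_\theta=\{u\in\mathcal{V}: x^*(u)\ge\theta\}$ and let $C_\theta$ be the cut consisting of the edges leaving $\mathcal{V}_\theta$. Then $\mathbb{E}_\theta[f(C_\theta)]\le (n-1)\tilde f(y^* )\le (n-1)f(C^* )$.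
   Context: An $(s,t)$-cut is a set of edges whose removal disconnects all $s$-$t$ paths. The Lovász extension: for $x\in[0,1]^m$ written uniquely as $x=\sum_j\lambda_j\chi_{B_j}$ with $\lambda_j>0$ and nested level sets $B_1\subset B_2\subset\cdots$, $\tilde f(x)=\sum_j\lambda_j f(B_j)$, where $\chi_B$ is the indicator vector of $B$. *)

From HB Require Import structures.
From mathcomp Require Import all_boot all_order all_algebra.
From mathcomp Require Import all_classical all_reals all_analysis.
Set Implicit Arguments. Unset Strict Implicit. Unset Printing Implicit Defensive.
Import Order.TTheory GRing.Theory Num.Theory.
Local Open Scope ring_scope.

Section Defs.
Variables (R : realType) (V E : finType) (src dst : E -> V).

Definition simple_digraph : Prop :=
  (forall e, src e != dst e) /\ injective (fun e => (src e, dst e)).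

Fixpoint walk (a b : V) (p : seq E) : bool :=
  match p with
  | [::] => a == b
  | e :: p' => (src e == a) && walk (dst e) b p'
  end.

Definition st_cut (s t : V) (C : {set E}) : Prop :=
  forall p : seq E, walk s t p -> has (fun e => e \in C) p.

Definition normalized (f : {set E} -> R) := f finset.set0 = 0.
Definition nonneg_fun (f : {set E} -> R) := forall A, 0 <= f A.
Definition monotone_set (f : {set E} -> R) :=
  forall A B : {set E}, A \subset B -> f A <= f B.
Definition submodular (f : {set E} -> R) :=
  forall A B : {set E}, f (A :|: B) + f (A :&: B) <= f A + f B.

(* Lovász extension (for y >= 0): with v_1 > ... > v_k > 0 the distinct positive
   values of y and v_{k+1} = 0, y = sum_j (v_j - v_{j+1}) chi_{B_j} with
   B_j = {e | v_j <= y e}, and the extension is sum_j (v_j - v_{j+1}) f(B_j). *)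
Definition lovasz (f : {set E} -> R) (y : E -> R) : R :=
  \sum_(v <- undup [seq y e | e <- enum E] | 0 < v)
     (v - \big[Num.max/0]_(e | y e < v) y e) * f [set e | v <= y e].

Definition relax_feasible (s t : V) (x : V -> R) (y : E -> R) : Prop :=
  (forall e, - x (src e) + x (dst e) + y e >= 0) /\
  x s - x t >= 1 /\ (forall e, 0 <= y e).

Definition relax_optimal f (s t : V) (x : V -> R) (y : E -> R) : Prop :=
  relax_feasible s t x y /\
  forall x' y', relax_feasible s t x' y' -> lovasz f y <= lovasz f y'.

Definition Vtheta (x : V -> R) (th : R) : {set V} := [set u | th <= x u].
Definition Ctheta (x : V -> R) (th : R) : {set E} :=
  [set e | (src e \in Vtheta x th) && (dst e \notin Vtheta x th)].

End Defs.

From HB Require Import structures.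
From mathcomp Require Import all_boot all_order all_algebra.
From mathcomp Require Import all_classical all_reals all_analysis.
From mathcomp Require Import measurable_realfun lra.
Set Implicit Arguments. Unset Strict Implicit. Unset Printing Implicit Defensive.
Import Order.TTheory GRing.Theory Num.Theory.
Local Open Scope ring_scope.

(* Every threshold th in (0, 1] lies in an interval (b u, x u], where b u is the
   largest value of x below x u (or 0), and on that interval C_th is the cut C_u
   leaving {w | x u <= x w}.  Hence E[f(C_th)] <= sum_u (x u - b u) f(C_u).  Every
   edge e of C_u has y e >= x (src e) - x (dst e) >= x u - b u, so monotonicity of
   f bounds each term by the Lovasz extension of y; the term of t vanishes since
   x t = 0, leaving n - 1 terms.  For the second inequality, the indicator of C*
   with the indicator of the vertices reachable from s outside C* is feasible,
   and the Lovasz extension of an indicator is f of the set. *)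

Section Levels.
Variables (R : realType) (T : finType).
Implicit Types (y : T -> R) (v w : R).

Definition levels y : seq R := undup [seq y e | e <- enum T].

Definition prev_level y v : R := \big[Num.max/0]_(e | y e < v) y e.

Lemma levels_uniq y : uniq (levels y).
Proof. exact: undup_uniq. Qed.

Lemma mem_levels y v : (v \in levels y) = [exists e, v == y e].
Proof.
rewrite mem_undup; apply/mapP/existsP => [[e _ ->]|[e /eqP ->]]; first by exists e.
by exists e; rewrite ?mem_enum.
Qed.

Lemma level_mem y e : y e \in levels y.
Proof. by rewrite mem_levels; apply/existsP; exists e. Qed.

Lemma prev_level_ge0 y v : 0 <= prev_level y v.
Proof. exact: bigmax_ge_id. Qed.

Lemma prev_level_lt y v : 0 < v -> prev_level y v < v.
Proof. by move=> v0; apply: bigmax_lt. Qed.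

Lemma le_prev_level y v e : y e < v -> y e <= prev_level y v.
Proof. by move=> h; apply: (le_bigmax_cond _ (P := fun e => y e < v)). Qed.

Lemma prev_level_le y v w :
  0 <= w -> (forall e, y e < v -> y e <= w) -> prev_level y v <= w.
Proof. by move=> w0 h; apply: bigmax_le. Qed.

Lemma prev_level_eq0 y v : (forall e, y e < v -> y e <= 0) -> prev_level y v = 0.
Proof. by move=> h; apply/eqP; rewrite eq_le prev_level_ge0 prev_level_le. Qed.

Lemma prev_levelP y v : 0 < prev_level y v ->
  exists2 e, y e < v & prev_level y v = y e.
Proof.
rewrite /prev_level; elim/big_rec: _ => [|e z Pe IH]; first by rewrite ltxx.
by have [_ /IH //|lt_z_ye _] := leP (y e) z; exists e.
Qed.

Lemma mem_levels_between y v w : 0 < v -> w \in levels y -> w != v ->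
  (0 < w <= v) = (0 < w <= prev_level y v).
Proof.
move=> v_gt0; rewrite mem_levels => /existsP[e /eqP ->] ne.
case: (ltP 0 (y e)) => //= _; apply/idP/idP => [le_v|le_p].
  by apply: le_prev_level; rewrite lt_neqAle ne.
by rewrite (le_trans le_p) // ltW // prev_level_lt.
Qed.

Lemma levels_telescope y v : v \in levels y -> 0 < v ->
  \sum_(w <- levels y | 0 < w <= v) (w - prev_level y w) = v.
Proof.
have [n] := ubnP #|[set e | y e < v]|.
elim: n v => // n IH v le_n v_lvl v_gt0.
set p := prev_level y v.
have rem_between : \sum_(w <- rem v (levels y) | 0 < w <= v) (w - prev_level y w)
    = \sum_(w <- rem v (levels y) | 0 < w <= p) (w - prev_level y w).
  rewrite big_seq_cond [RHS]big_seq_cond; apply: eq_bigl => w.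
  rewrite mem_rem_uniq ?levels_uniq // !inE.
  by case: eqP => //= /eqP ne; case: (boolP (w \in _)) => //= /mem_levels_between ->.
rewrite (big_rem v) //= v_gt0 lexx rem_between -/p.
have [p0|p_gt0] := eqVneq p 0.
  rewrite p0 subr0 big1_seq ?addr0 // => w /andP[/andP[/lt_le_trans h /h]].
  by rewrite ltxx.
have /prev_levelP [e1 lt_v] : 0 < p by rewrite lt_def p_gt0 prev_level_ge0.
rewrite -/p => pE.
have p_lvl : p \in levels y by rewrite pE level_mem.
have lt_n : (#|[set e | (y e < p)%R]| < n)%N.
  rewrite -ltnS (leq_trans _ le_n) // ltnS; apply: proper_card; apply/properP; split.
    by apply/fintype.subsetP => e; rewrite !inE => /lt_trans; apply; rewrite pE.
  by exists e1; rewrite !inE ?pE ?lt_v ?ltxx.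
have := IH p lt_n p_lvl; rewrite lt_def p_gt0 prev_level_ge0 => /(_ isT).
rewrite (big_rem v) //= [0 < v <= p]andbC leNgt prev_level_lt //= add0r => ->.
by rewrite subrK.
Qed.
End Levels.

Section Lovasz.
Variables (R : realType) (E : finType) (f : {set E} -> R).
Implicit Types (y : E -> R) (C : {set E}).

Lemma lovaszE y : lovasz f y =
  \sum_(v <- levels y | 0 < v) (v - prev_level y v) * f [set e | v <= y e].
Proof. by []. Qed.

Lemma lovasz_ge0 y : nonneg_fun f -> 0 <= lovasz f y.
Proof.
move=> f_ge0; apply: sumr_ge0 => v v_gt0; apply: mulr_ge0 => //.
by rewrite subr_ge0 ltW ?prev_level_lt.
Qed.

Lemma lovasz_ge_scaled y C c : normalized f -> nonneg_fun f -> monotone_set f ->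
  0 <= c -> (forall e, e \in C -> c <= y e) -> c * f C <= lovasz f y.
Proof.
move=> f0 f_ge0 f_mono c_ge0 c_le.
have [->|[e1 e1C]] := set_0Vmem C; first by rewrite f0 mulr0 lovasz_ge0.
have [e0 e0C min_e0] : exists2 e0, e0 \in C & forall e, e \in C -> y e0 <= y e.
  by case: (arg_minP y e1C) => e0; exists e0.
have [a_le0|a_gt0] := leP (y e0) 0.
  by rewrite (@le_anti _ _ c 0) ?c_ge0 ?(le_trans (c_le _ e0C)) ?mul0r ?lovasz_ge0.
have step_ge0 v : 0 < v -> 0 <= v - prev_level y v.
  by move=> v_gt0; rewrite subr_ge0 ltW ?prev_level_lt.
rewrite lovaszE (bigID (fun v => v <= y e0)) /=.
apply: le_trans (_ : _ <= \sum_(v <- levels y | 0 < v <= y e0)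
    (v - prev_level y v) * f [set e | v <= y e]) _; last first.
  by rewrite lerDl sumr_ge0 // => v /andP[/step_ge0 ? _]; rewrite mulr_ge0.
apply: le_trans (_ : _ <= \sum_(v <- levels y | 0 < v <= y e0)
    (v - prev_level y v) * f C) _; last first.
  apply: ler_sum => v /andP[/step_ge0 ? le_v]; rewrite ler_wpM2l // f_mono //.
  by apply/fintype.subsetP => e eC; rewrite inE (le_trans le_v) ?min_e0.
by rewrite -big_distrl /= levels_telescope ?level_mem // ler_wpM2r ?c_le.
Qed.

Lemma lovasz_indicator C : normalized f ->
  lovasz f (fun e => if e \in C then 1 else 0) = f C.
Proof.
move=> f0; set y := fun e => _.
have pos_level1 v : v \in levels y -> 0 < v -> v = 1.
  rewrite mem_levels => /existsP[e /eqP ->].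
  by rewrite /y; case: (e \in C); rewrite ?ltxx.
have only1 r : {subset r <= levels y} -> 1 \notin r ->
    \sum_(v <- r | 0 < v) (v - prev_level y v) * f [set e | v <= y e] = 0.
  move=> sub r1; rewrite big1_seq // => v /andP[v_gt0 vr].
  by move: r1; rewrite -(pos_level1 v (sub v vr) v_gt0) vr.
have [C0|[e1 e1C]] := set_0Vmem C.
  rewrite lovaszE only1 ?C0 ?f0 // mem_levels; apply/existsP => -[e].
  by rewrite /y C0 inE oner_eq0.
have one_lvl : 1 \in levels y.
  by rewrite mem_levels; apply/existsP; exists e1; rewrite /y e1C.
rewrite lovaszE (big_rem 1) //= ltr01 only1 ?addr0; last 2 first.
- by move=> v /mem_rem.
- by rewrite mem_rem_uniq ?levels_uniq // inE eqxx.
have -> : prev_level y 1 = 0.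
  by apply: prev_level_eq0 => e; rewrite /y; case: (e \in C); rewrite ?ltxx.
have -> : [set e | 1 <= y e] = C.
  by apply/setP => e; rewrite inE /y; case: (e \in C); rewrite ?lexx ?ler10.
by rewrite subr0 mul1r.
Qed.

End Lovasz.

Section Integral.
Local Open Scope ereal_scope.
Variables (d : measure_display) (T : measurableType d) (R : realType).
Variable mu : {measure set T -> \bar R}.

(* No measurability is needed: the integral of a nonnegative function is the
   supremum of the integrals of the simple functions below it. *)
Lemma ge0_le_integral_any (D : set T) (g h : T -> \bar R) :
  (forall x, D x -> 0 <= g x) -> (forall x, D x -> g x <= h x) ->
  \int[mu]_(x in D) g x <= \int[mu]_(x in D) h x.
Proof.
move=> g_ge0 le_gh; rewrite !ge0_integralE // => [|x Dx]; last first.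
  exact: le_trans (g_ge0 _ Dx) (le_gh _ Dx).
apply: ereal_sup_le => _ [k le_kg <-]; exists k => //= x.
by apply: le_trans (le_kg x) _; exact: lee_restrict.
Qed.

End Integral.

Section StepIntegral.
Local Open Scope ereal_scope.
Variable R : realType.

Lemma integral_scaled_indic_itv_le (D : set R) (a b k : R) : measurable D ->
  (0 <= k)%R -> (b <= a)%R ->
  \int[@lebesgue_measure R]_(x in D) (k * \1_(`]b, a]%classic) x)%:E
    <= (k * (a - b))%:E.
Proof.
move=> mD k_ge0 le_ba.
under eq_integral do rewrite EFinM.
rewrite ge0_integralZl //; last by apply/measurable_EFinP; exact: measurable_indic.
rewrite integral_indic // EFinM lee_wpmul2l ?lee_fin //.
have := @le_measure _ _ _ (@lebesgue_measure R) (`]b, a] `&` D)%classic `]b, a]%classic.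
move=> /(_ _ _ (@subIsetl _ _ _)) le_itv; apply: le_trans (le_itv _ _) _.
- by rewrite inE; exact: measurableI.
- by rewrite inE.
rewrite [leLHS](_ : _ = lebesgue_measure (`]b, a]%classic : set R)) //.
by rewrite lebesgue_measure_itv /= lte_fin; case: ltP; rewrite ?lee_fin ?subr_ge0.
Qed.

End StepIntegral.

Section Relaxation.
Variables (R : realType) (V E : finType) (src dst : E -> V).

Lemma walk_rcons a b p e : walk src dst a b p -> src e = b ->
  walk src dst a (dst e) (rcons p e).
Proof.
elim: p a => [|e' p IH] a /=; first by move=> /eqP -> ->; rewrite !eqxx.
by case/andP=> -> w_p src_e; rewrite IH.
Qed.

(* The potential is the indicator of the vertices reachable from s without
   crossing C. *)
Lemma relax_feasible_cut s t C : st_cut src dst s t C ->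
  exists x : V -> R, relax_feasible src dst s t x (fun e => if e \in C then 1 else 0).
Proof.
move=> cutC.
pose reach u := `[< exists p, walk src dst s u p && all (fun e => e \notin C) p >].
exists (fun u => if reach u then 1 else 0).
have reach_s : reach s by apply/asboolP; exists [::]; rewrite /= eqxx.
have reach_t : reach t = false.
  apply/negbTE/negP => /asboolP [p /andP[w_p /allP notC]].
  by have /hasP[e /notC /negPf ->] := cutC p w_p.
split; [|split] => [e||e]; last by case: (e \in C).
- case eC: (e \in C); first by case: (reach _); case: (reach _); lra.
  case reach_src: (reach (src e)); last by case: (reach _); lra.
  suff -> : reach (dst e) by lra.
  move/asboolP: reach_src => [p /andP[w_p notC]]; apply/asboolP; exists (rcons p e).
  by rewrite all_rcons eC notC (walk_rcons w_p).
- by rewrite reach_s reach_t; lra.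
Qed.

Lemma relax_optimal_le_cut (f : {set E} -> R) s t x y C : normalized f ->
  relax_optimal src dst f s t x y -> st_cut src dst s t C -> lovasz f y <= f C.
Proof.
move=> f0 [_ opt] /relax_feasible_cut [x' feas].
by rewrite -lovasz_indicator //; apply: opt feas.
Qed.

End Relaxation.

Section Thresholds.
Variables (R : realType) (V E : finType) (src dst : E -> V).
Variables (x : V -> R) (f : {set E} -> R).
Hypotheses (x_ge0 : forall u, 0 <= x u) (f0 : normalized f)
  (f_ge0 : nonneg_fun f) (f_mono : monotone_set f).

Let C th := Ctheta src dst x th.
Let b u := prev_level x (x u).

Lemma Vtheta_prev_level u th : b u < th <= x u -> Vtheta x th = Vtheta x (x u).
Proof.
case/andP=> lt_b le_u; apply/setP => w; rewrite !inE; apply/idP/idP => [le_w|].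
  rewrite leNgt; apply/negP => /le_prev_level /le_lt_trans /(_ lt_b).
  by rewrite ltNge le_w.
exact: le_trans.
Qed.

Lemma exists_prev_level_lt th w : 0 < th -> th <= x w ->
  exists u, b u < th <= x u.
Proof.
move=> th_gt0 le_w; have [u le_u min_u] := arg_minP (P := fun w => th <= x w) x le_w.
exists u; rewrite le_u andbT; apply: bigmax_lt => // v lt_v.
by rewrite ltNge; apply/negP => /min_u; rewrite leNgt lt_v.
Qed.

Lemma Ctheta_le_level_sum th :
  f (C th) <= \sum_u f (C (x u)) * \1_(`]b u, x u]%classic) th.
Proof.
have sum_ge0 : 0 <= \sum_u f (C (x u)) * \1_(`]b u, x u]%classic) th.
  by apply: sumr_ge0 => u _; rewrite mulr_ge0 // indicE ler0n.
have [->|[e]] := set_0Vmem (C th); first by rewrite f0.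
rewrite !inE -ltNge => /andP[le_src lt_dst].
have [u /[dup] bu /andP[lt_b le_u]] :=
  exists_prev_level_lt (le_lt_trans (x_ge0 _) lt_dst) le_src.
rewrite (bigD1 u) //= indicE mem_set /= ?in_itv /= ?lt_b ?le_u // mulr1.
by rewrite /C /Ctheta (Vtheta_prev_level bu) lerDl; apply: sumr_ge0 => v _;
  rewrite mulr_ge0 // indicE ler0n.
Qed.

Lemma level_cut_le_lovasz (y : E -> R) u :
  (forall e, - x (src e) + x (dst e) + y e >= 0) ->
  f (C (x u)) * (x u - b u) <= lovasz f y.
Proof.
move=> feas; rewrite mulrC; apply: lovasz_ge_scaled => //.
  by rewrite subr_ge0 prev_level_le // => v /ltW.
move=> e; rewrite /C /Ctheta !inE -ltNge => /andP[le_src /le_prev_level le_dst].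
by have := feas e; rewrite -/(b u) in le_dst; lra.
Qed.

(* The level [x t = 0] contributes nothing, which leaves #|V| - 1 terms. *)
Lemma sum_level_cuts_le (y : E -> R) t : x t = 0 ->
  (forall e, - x (src e) + x (dst e) + y e >= 0) ->
  \sum_u f (C (x u)) * (x u - b u) <= (#|V|.-1)%:R * lovasz f y.
Proof.
move=> xt0 feas; have bt0 : b t = 0 by apply: prev_level_eq0 => v; rewrite xt0 => /ltW.
rewrite (bigD1 t) //= xt0 bt0 subrr mulr0 add0r.
apply: le_trans (ler_sum _ (fun u _ => level_cut_le_lovasz u feas)) _.
by rewrite sumr_const cardC1 mulr_natl.
Qed.

Lemma integral_Ctheta_le (D : set R) : measurable D ->
  (\int[@lebesgue_measure R]_(th in D) (f (C th))%:E
    <= (\sum_u f (C (x u)) * (x u - b u))%:E)%E.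
Proof.
move=> mD.
apply: le_trans (ge0_le_integral_any (@lebesgue_measure R) (D := D)
  (h := fun th => (\sum_u f (C (x u)) * \1_(`]b u, x u]%classic) th)%:E) _ _) _.
- by move=> th _; rewrite lee_fin.
- by move=> th _; rewrite lee_fin Ctheta_le_level_sum.
under eq_integral do rewrite -sumEFin.
rewrite ge0_integral_sum // => [|u|u th _]; last 2 first.
- apply/measurable_EFinP; apply: measurable_funM; first exact: measurable_cst.
  exact: measurable_indic.
- by rewrite lee_fin mulr_ge0 // indicE ler0n.
rewrite -sumEFin; apply: lee_sum => u _; apply: integral_scaled_indic_itv_le => //.
by rewrite prev_level_le // => v /ltW.
Qed.

End Thresholds.

Theorem lemma10 (R : realType) (V E : finType) (src dst : E -> V) (s t : V)
  (f : {set E} -> R) (Cstar : {set E}) (xs : V -> R) (ys : E -> R) :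
  simple_digraph src dst -> s != t ->
  normalized f -> nonneg_fun f -> monotone_set f -> submodular f ->
  st_cut src dst s t Cstar ->
  (forall C, st_cut src dst s t C -> f Cstar <= f C) ->
  relax_optimal src dst f s t xs ys ->
  (forall u, 0 <= xs u <= 1) -> (forall e, 0 <= ys e <= 1) ->
  (\int[@lebesgue_measure R]_(th in `[0%R, 1%R]%classic)
      (f (Ctheta src dst xs th))%:E
     <= ((#|V|.-1)%:R * lovasz f ys)%:E)%E /\
  (#|V|.-1)%:R * lovasz f ys <= (#|V|.-1)%:R * f Cstar.
Proof.
move=> _ _ f0 f_ge0 f_mono _ cut_star _ opt x01 _.
split; last by rewrite ler_wpM2l // (relax_optimal_le_cut f0 opt cut_star).
have [[feas [x_st _]] _] := opt.
have x_ge0 u : 0 <= xs u by case/andP: (x01 u).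
have xt0 : xs t = 0 by have := x_ge0 t; have /andP[_] := x01 s; lra.
apply: le_trans (integral_Ctheta_le src dst x_ge0 f0 f_ge0 _) _ => //.
by rewrite lee_fin (sum_level_cuts_le x_ge0 f0 f_ge0 f_mono xt0 feas).
Qed.
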